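(* Let $N\in\mathbb{N}$ with $N>2$, $m,M\in(0,1)$ with $m\le M$, and $a_1,\dots,a_N\in[m,M]$. For $i\in[N]$ let \[ M_i=\frac1N\min\Big\{m+(N-1)M,\ (N-2)(a_i-m)+\sum_{j=1}^N a_j\Big\}, \] and for every non-empty $K\subseteq[N]$ let \[ B^{(K)}=\frac{(N-2)m+\sum_{l\in[N]\setminus K}M_l}{2N-2-|K|}. \] Then $m\le B^{(K)}\le M_k$ for all $k\in K$.
   Context: $[N]=\{1,\dots,N\}$. *)

From HB Require Import structures.
From mathcomp Require Import all_boot all_order all_algebra.
Set Implicit Arguments. Unset Strict Implicit. Unset Printing Implicit Defensive.
Import Order.TTheory GRing.Theory Num.Theory.
Local Open Scope ring_scope.

(* Indices [N] = {1..N} are represented by 'I_N = {0..N-1}. *)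

Definition Mi (R : realFieldType) (N : nat) (m M : R) (a : 'I_N -> R) (i : 'I_N) : R :=
  N%:R^-1 * Num.min (m + (N%:R - 1) * M)
                    ((N%:R - 2) * (a i - m) + \sum_(j < N) a j).

Definition BK (R : realFieldType) (N : nat) (m M : R) (a : 'I_N -> R) (K : {set 'I_N}) : R :=
  ((N%:R - 2) * m + \sum_(l in ~: K) Mi m M a l) / (2 * N%:R - 2 - #|K|%:R).

From HB Require Import structures.
From mathcomp Require Import all_boot all_order all_algebra.
From mathcomp Require Import lra zify.
Set Implicit Arguments. Unset Strict Implicit. Unset Printing Implicit Defensive.
Import Order.TTheory GRing.Theory Num.Theory.
Local Open Scope ring_scope.

(* Write e_l = a_l - m >= 0.  B^(K) is the mean of N - 2 copies of m and of
   the M_l with l outside K, and every M_l is at least m, whence m <= B^(K).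
   For the upper bound, N M_l = min(m + (N-1)M, N m + (N-2) e_l + sum_j e_j),
   and min(u, x + t) <= min(u, x) + t gives N M_l <= N M_k + (N-2) e_l.  So it
   suffices that sum_(l notin K) e_l <= N (M_k - m): that sum is at most
   sum_j e_j and, K being non-empty, at most (N-1)(M-m).  The argument works for
   every k, not only k in K, and never uses 0 < m or M < 1. *)

Lemma ler_sum_set_ge0 (R : numDomainType) (I : finType) (L : {set I})
    (F : I -> R) :
  (forall i, 0 <= F i) -> \sum_(i in L) F i <= \sum_i F i.
Proof.
move=> F_ge0; rewrite [leRHS](bigID (mem L)) /= lerDl.
by apply: sumr_ge0 => i _; exact: F_ge0.
Qed.

Lemma min_addr_le (R : realDomainType) (u x t : R) :
  0 <= t -> Num.min u (x + t) <= Num.min u x + t.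
Proof.
move=> t_ge0; case: (lerP u x) => _.
- by rewrite ge_min lerDl t_ge0.
- by rewrite ge_min lexx orbT.
Qed.

Definition padded_mean (R : realFieldType) (I : finType) (p m : R) (L : {set I})
    (x : I -> R) : R :=
  (p * m + \sum_(l in L) x l) / (p + #|L|%:R).

Section PaddedMean.

Variables (R : realFieldType) (I : finType) (p m : R) (L : {set I}) (x : I -> R).
Hypothesis weight_gt0 : 0 < p + #|L|%:R.

Lemma padded_mean_ge : (forall l, l \in L -> m <= x l) -> m <= padded_mean p m L x.
Proof.
move=> x_ge; rewrite ler_pdivlMr // mulrDr [m * p]mulrC lerD2l mulr_natr.
by rewrite -sumr_const; exact: ler_sum.
Qed.

Lemma padded_mean_le c :
  \sum_(l in L) (x l - c) <= p * (c - m) -> padded_mean p m L x <= c.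
Proof. by rewrite ler_pdivrMr // sumrB sumr_const -mulr_natr; lra. Qed.

End PaddedMean.

Section Bounds.

Variables (R : realFieldType) (N : nat) (m M : R) (a : 'I_N -> R).
Hypotheses (N_gt2 : (2 < N)%N) (m_le_M : m <= M) (a_bounds : forall i, m <= a i <= M).

Local Notation n := (N%:R : R).
Local Notation S := (\sum_(j < N) a j).

Let n_gt2 : 2 < n. Proof. by rewrite ltr_nat. Qed.
Let n_gt0 : 0 < n. Proof. by apply: lt_trans n_gt2. Qed.

Let a_ge i : m <= a i. Proof. by case/andP: (a_bounds i). Qed.
Let a_le i : a i <= M. Proof. by case/andP: (a_bounds i). Qed.
Let e_ge0 i : 0 <= (n - 2) * (a i - m).
Proof. by apply: mulr_ge0; [move: n_gt2 | move: (a_ge i)]; lra. Qed.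

Lemma mulr_Mi l :
  n * Mi m M a l = Num.min (m + (n - 1) * M) ((n - 2) * (a l - m) + S).
Proof. by rewrite /Mi mulrA mulfV ?mul1r // gt_eqF. Qed.

Lemma sum_excess_le (L : {set 'I_N}) :
  n * m + \sum_(l in L) (a l - m) <= S.
Proof.
have -> : S = n * m + \sum_(j < N) (a j - m).
  by rewrite sumrB sumr_const card_ord -[m *+ N]mulr_natl addrC subrK.
by rewrite lerD2l; apply: ler_sum_set_ge0 => j; rewrite subr_ge0.
Qed.

Lemma sum_excess_setC_le_cap (K : {set 'I_N}) : K != set0 ->
  n * m + \sum_(l in ~: K) (a l - m) <= m + (n - 1) * M.
Proof.
rewrite -card_gt0 => K_gt0.
have card_setC : (#|~: K|.+1 <= N)%N.
  by have := cardsC K; rewrite card_ord; lia.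
have cardR : #|~: K|%:R <= n - 1 :> R.
  by rewrite -(ler_nat R) -natr1 in card_setC; lra.
have : \sum_(l in ~: K) (a l - m) <= #|~: K|%:R * (M - m).
  by rewrite mulr_natl -sumr_const; apply: ler_sum => l _; rewrite lerD2r a_le.
have : 0 <= M - m by rewrite subr_ge0.
nra.
Qed.

Lemma Mi_ge_m l : m <= Mi m M a l.
Proof.
rewrite -(ler_pM2l n_gt0) mulr_Mi le_min; apply/andP; split.
  have : 0 <= (n - 1) * (M - m) by apply: mulr_ge0; move: n_gt2 m_le_M; lra.
  lra.
have := sum_excess_le set0; rewrite big_set0 addr0.
by move: (e_ge0 l); lra.
Qed.

Lemma Mi_le_add k l : Mi m M a l <= Mi m M a k + (n - 2) / n * (a l - m).
Proof.
rewrite -(ler_pM2l n_gt0) mulrDr.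
have -> : n * ((n - 2) / n * (a l - m)) = (n - 2) * (a l - m).
  by rewrite mulrA mulrCA mulfV ?gt_eqF // mulr1.
rewrite !mulr_Mi.
apply: le_trans (min_addr_le _ _ (e_ge0 l)).
rewrite le_min !ge_min lexx /=; apply/orP; right.
by move: (e_ge0 k); lra.
Qed.

Lemma sum_excess_setC_le_Mi (K : {set 'I_N}) k : K != set0 ->
  \sum_(l in ~: K) (a l - m) <= n * (Mi m M a k - m).
Proof.
move=> K_neq0; rewrite mulrBr mulr_Mi lerBrDl le_min.
apply/andP; split; first exact: sum_excess_setC_le_cap.
by move: (sum_excess_le (~: K)) (e_ge0 k); lra.
Qed.

Lemma sum_setC_Mi_sub_le (K : {set 'I_N}) k : K != set0 ->
  \sum_(l in ~: K) (Mi m M a l - Mi m M a k) <= (n - 2) * (Mi m M a k - m).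
Proof.
move=> K_neq0.
apply: le_trans (_ : \sum_(l in ~: K) (n - 2) / n * (a l - m) <= _).
  by apply: ler_sum => l _; rewrite lerBlDl; exact: Mi_le_add.
rewrite -mulr_sumr -mulrA; apply: ler_wpM2l; first by move: n_gt2; lra.
by rewrite ler_pdivrMl ?sum_excess_setC_le_Mi.
Qed.

Lemma BK_padded_mean (K : {set 'I_N}) :
  BK m M a K = padded_mean (n - 2) m (~: K) (Mi m M a).
Proof.
rewrite /BK /padded_mean; congr (_ / _).
have -> : n = (#|K| + #|~: K|)%:R by rewrite cardsC card_ord.
by rewrite natrD; lra.
Qed.

Lemma padded_weight_gt0 (K : {set 'I_N}) : 0 < (n - 2) + #|~: K|%:R.
Proof. by move: n_gt2 (ler0n R #|~: K|); lra. Qed.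

End Bounds.

Theorem lemma3 (R : realFieldType) (N : nat) (m M : R) (a : 'I_N -> R)
  (hN : (2 < N)%N)
  (hm0 : 0 < m) (hm1 : m < 1) (hM0 : 0 < M) (hM1 : M < 1) (hmM : m <= M)
  (ha : forall i, m <= a i <= M) :
  forall K : {set 'I_N}, K != set0 ->
    m <= BK m M a K /\ (forall k, k \in K -> BK m M a K <= Mi m M a k).
Proof.
move=> K K_neq0; rewrite BK_padded_mean; split.
- by apply: padded_mean_ge => [|l _]; [exact: padded_weight_gt0 | exact: Mi_ge_m].
- move=> k _; apply: padded_mean_le; first exact: padded_weight_gt0.
  exact: sum_setC_Mi_sub_le.
Qed.
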